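(* Let $a,b,c$ be positive numbers with $a<b<c$ and $b-a<c_0<a$, where $c_0=c-\lfloor c/b\rfloor b$. Let $H=[c_0+a-b,c_0)+a\mathbb Z$ and $\tilde H=[c-c_0,c-c_0+b-a)+a\mathbb Z$. Then: (i) $\mathcal S_{a,b,c}$ satisfies $R_{a,b,c}\mathcal S_{a,b,c}\subset\mathcal S_{a,b,c}$, $\tilde R_{a,b,c}\mathcal S_{a,b,c}\subset\mathcal S_{a,b,c}$ and $\mathcal S_{a,b,c}\cap(H\cup\tilde H)=\emptyset$; and every set $E\subset\mathbb R$ with $R_{a,b,c}E\subset E$, $\tilde R_{a,b,c}E\subset E$ and $E\cap(H\cup\tilde H)=\emptyset$ satisfies $E\subset\mathcal S_{a,b,c}$. (ii) $\mathbb R\setminus\mathcal S_{a,b,c}$ satisfies $R_{a,b,c}(\mathbb R\setminus\mathcal S_{a,b,c})\subset\mathbb R\setminus\mathcal S_{a,b,c}$, $\tilde R_{a,b,c}(\mathbb R\setminus\mathcal S_{a,b,c})\subset\mathbb R\setminus\mathcal S_{a,b,c}$ and contains $H\cup\tilde H$; and every set $F$ with $R_{a,b,c}F\subset F$, $\tilde R_{a,b,c}F\subset F$ and $H\cup\tilde H\subset F$ contains $\mathbb R\setminus\mathcal S_{a,b,c}$.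
   Context: For $a,b,c>0$ and $t\in\mathbb R$, $\mathbf M_{a,b,c}(t)=(\chi_{[0,c)}(t-\mu+\lambda))_{\mu\in a\mathbb Z,\lambda\in b\mathbb Z}$ is the infinite matrix with rows indexed by $a\mathbb Z$ and columns by $b\mathbb Z$, acting by $(\mathbf M_{a,b,c}(t)\mathbf x)(\mu)=\sum_{\lambda\in b\mathbb Z}\chi_{[0,c)}(t-\mu+\lambda)\mathbf x(\lambda)$. $\mathcal B_b$ is the set of vectors $(\mathbf x(\lambda))_{\lambda\in b\mathbb Z}$ with entries in $\{0,1\}$, and $\mathcal B_b^0=\{\mathbf x\in\mathcal B_b:\mathbf x(0)=1\}$. $\mathbf 1$ denotes the vector indexed by $a\mathbb Z$ with all entries $1$. $\mathcal S_{a,b,c}=\{t:\mathbf M_{a,b,c}(t)\mathbf x=\mathbf 1\text{ for some }\mathbf x\in\mathcal B_b^0\}$. With $c_0=c-\lfloor c/b\rfloor b$ and $b-a<c_0<a$, the piecewise linear maps $R_{a,b,c},\tilde R_{a,b,c}:\mathbb R\to\mathbb R$ are: $R_{a,b,c}(t)=t+\lfloor c/b\rfloor b+b$ if $t\in[0,c_0+a-b)+a\mathbb Z$, $R_{a,b,c}(t)=t$ if $t\in[c_0+a-b,c_0)+a\mathbb Z$, $R_{a,b,c}(t)=t+\lfloor c/b\rfloor b$ if $t\in[c_0,a)+a\mathbb Z$; $\tilde R_{a,b,c}(t)=t-\lfloor c/b\rfloor b$ if $t\in[c-a,c-c_0)+a\mathbb Z$, $\tilde R_{a,b,c}(t)=t$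 if $t\in[c-c_0,c-c_0+b-a)+a\mathbb Z$, $\tilde R_{a,b,c}(t)=t-\lfloor c/b\rfloor b-b$ if $t\in[c-c_0+b-a,c)+a\mathbb Z$. Here $A+a\mathbb Z=\{x+ak:x\in A,k\in\mathbb Z\}$. *)

From Stdlib Require Import Reals Lra Lia ZArith ClassicalDescription.
Open Scope R_scope.

Definition chi (c x : R) : R :=
  if Rle_dec 0 x then (if Rlt_dec x c then 1 else 0) else 0.

(* A 0/1 vector indexed by bZ : entry x(b*k) is represented by x k. *)
(* Term of the row mu = a*m of M_{a,b,c}(t) x at column lambda = b*k. *)
Definition Mterm (a b c t : R) (x : Z -> bool) (m k : Z) : R :=
  chi c (t - a * IZR m + b * IZR k) * (if x k then 1 else 0).

Definition Mpartial (a b c t : R) (x : Z -> bool) (m : Z) (N : nat) : R :=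
  sum_f_R0 (fun i => Mterm a b c t x m (Z.of_nat i - Z.of_nat N)%Z) (2 * N).

(* (M_{a,b,c}(t) x)(a*m) = v : the series over bZ (which has only finitely
   many nonzero terms) sums to v. *)
Definition Mrow_eq (a b c t : R) (x : Z -> bool) (m : Z) (v : R) : Prop :=
  exists N0 : nat, forall N : nat, (N0 <= N)%nat -> Mpartial a b c t x m N = v.

Definition S_abc (a b c : R) (t : R) : Prop :=
  exists x : Z -> bool, x 0%Z = true /\ forall m : Z, Mrow_eq a b c t x m 1.

Definition in_per (a u v t : R) : Prop :=
  exists k : Z, u <= t - a * IZR k < v.

Definition flcb (b c : R) : R := IZR (Int_part (c / b)).
Definition c0 (b c : R) : R := c - flcb b c * b.

Definition Rmap (a b c t : R) : R :=
  if excluded_middle_informative (in_per a 0 (c0 b c + a - b) t)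
  then t + flcb b c * b + b
  else if excluded_middle_informative (in_per a (c0 b c + a - b) (c0 b c) t)
  then t
  else t + flcb b c * b.   (* t in [c0, a) + aZ *)

Definition Rtmap (a b c t : R) : R :=
  if excluded_middle_informative (in_per a (c - a) (c - c0 b c) t)
  then t - flcb b c * b
  else if excluded_middle_informative
            (in_per a (c - c0 b c) (c - c0 b c + b - a) t)
  then t
  else t - flcb b c * b - b.   (* t in [c - c0 + b - a, c) + aZ *)

Definition Hset (a b c t : R) : Prop := in_per a (c0 b c + a - b) (c0 b c) t.
Definition Htset (a b c t : R) : Prop :=
  in_per a (c - c0 b c) (c - c0 b c + b - a) t.

Definition maps_into (f : R -> R) (E : R -> Prop) : Prop :=
  forall t, E t -> E (f t).

(* Proof outline.
   1. A row of M(t)x equals 1 iff exactly one column k with x(k) = 1 lies in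
      the row's window a*m <= t + b*k < a*m + c; so t is in S iff some
      "admissible" 0/1 vector x (x(0) = 1, one hit per row) exists.
      Admissibility is invariant under re-centring t at a support point.
   2. R and R~ are read off from the residue of t modulo aZ.  Comparing the
      rows adjacent to the one hit by column 0 locates the support point of
      an admissible x following (resp. preceding) 0: it is exactly the
      shift performed by R (resp. R~), and no such point exists on H
      (resp. H~).  Hence S is R- and R~-invariant and avoids H u H~.
   3. Off H, R advances u by a positive multiple of b, and the multiples of
      a above R(u) - c are exactly those above u; R~ inverts R off H, R
      inverts R~ off H~, and R, R~ fix H, H~ pointwise.  Iterating R and R~ on a point of
      an invariant set avoiding H u H~ yields a bi-infinite "staircase"
      whose values give an admissible vector; this is maximality.
   4. Part (ii) follows from (i) by complementation. *)

From Stdlib Require Import Reals Lra Lia ZArith ClassicalDescription Classical.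
Open Scope R_scope.

Lemma sum_single (f : nat -> R) (n i0 : nat) : (i0 <= n)%nat ->
  (forall i, (i <= n)%nat -> i <> i0 -> f i = 0) -> sum_f_R0 f n = f i0.
Proof.
  induction n as [|n IH]; intros Hi Hzero; simpl.
  - replace i0 with 0%nat by lia; reflexivity.
  - destruct (Nat.eq_dec i0 (S n)) as [->|Hne].
    + rewrite sum_eq_R0; [ring|]. intros i Hi'; apply Hzero; lia.
    + rewrite IH, (Hzero (S n)) by (try lia; intros; apply Hzero; lia). ring.
Qed.

Lemma sum_ge_term (f : nat -> R) (n i0 : nat) :
  (forall i, 0 <= f i) -> (i0 <= n)%nat -> f i0 <= sum_f_R0 f n.
Proof.
  intros Hf. induction n as [|n IH]; intros Hi; simpl.
  - replace i0 with 0%nat by lia; lra.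
  - destruct (Nat.eq_dec i0 (S n)) as [->|Hne].
    + pose proof (cond_pos_sum f n Hf). lra.
    + specialize (IH ltac:(lia)). specialize (Hf (S n)). lra.
Qed.

Lemma sum_ge_two_terms (f : nat -> R) (n i0 i1 : nat) : (forall i, 0 <= f i) ->
  i0 <> i1 -> (i0 <= n)%nat -> (i1 <= n)%nat -> f i0 + f i1 <= sum_f_R0 f n.
Proof.
  intros Hf Hne.
  assert (Hordered : forall j0 j1, (j0 < j1)%nat -> (j1 <= n)%nat ->
                     f j0 + f j1 <= sum_f_R0 f n).
  { intros j0 j1 Hlt. induction n as [|n IH]; intros Hj1; simpl; [lia|].
    destruct (Nat.eq_dec j1 (S n)) as [->|Hne1].
    - pose proof (sum_ge_term f n j0 Hf ltac:(lia)). lra.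
    - specialize (IH ltac:(lia)). specialize (Hf (S n)). lra. }
  intros Hi0 Hi1. destruct (Nat.lt_total i0 i1) as [Hlt|[Heq|Hgt]].
  - now apply Hordered.
  - contradiction.
  - rewrite Rplus_comm. now apply Hordered.
Qed.

(** * Rows of M(t)x and admissible vectors *)

(* Column k meets row m, i.e. chi_[0,c)(t - a*m + b*k) = 1. *)
Definition window (a b c t : R) (m k : Z) : Prop :=
  a * IZR m <= t + b * IZR k < a * IZR m + c.

Definition admissible (a b c t : R) (x : Z -> bool) : Prop :=
  x 0%Z = true /\ forall m, exists! k, x k = true /\ window a b c t m k.

Lemma Mterm_hit a b c t x m k :
  x k = true -> window a b c t m k -> Mterm a b c t x m k = 1.
Proof.
  intros Hx Hw. unfold Mterm, chi, window in *. rewrite Hx.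
  destruct (Rle_dec _ _); [|lra]. destruct (Rlt_dec _ _); lra.
Qed.

Lemma Mterm_miss a b c t x m k :
  ~ (x k = true /\ window a b c t m k) -> Mterm a b c t x m k = 0.
Proof.
  intros Hmiss. unfold Mterm, chi.
  destruct (x k) eqn:Hx; [|ring].
  destruct (Rle_dec _ _); [|ring]. destruct (Rlt_dec _ _); [|ring].
  exfalso. apply Hmiss. split; [reflexivity|]. unfold window. lra.
Qed.

Lemma Mterm_nonneg a b c t x m k : 0 <= Mterm a b c t x m k.
Proof.
  unfold Mterm, chi.
  destruct (x k); destruct (Rle_dec _ _); try destruct (Rlt_dec _ _); lra.
Qed.

(* A row of M(t)x sums to 1 iff exactly one support column meets it.  In the
   partial sum of order N, column k sits at index k + N. *)
Lemma row_eq_one_iff a b c t x m :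
  Mrow_eq a b c t x m 1 <-> exists! k, x k = true /\ window a b c t m k.
Proof.
  split.
  - intros [N0 HN].
    assert (Hhit : exists k, x k = true /\ window a b c t m k).
    { apply NNPP; intros Hno. specialize (HN N0 (le_n _)).
      unfold Mpartial in HN. rewrite sum_eq_R0 in HN; [lra|].
      intros i _. apply Mterm_miss. intros Hk. apply Hno; eauto. }
    destruct Hhit as [k Hk]. exists k. split; [exact Hk|].
    intros k' Hk'. apply NNPP; intros Hne.
    set (N := (N0 + Z.to_nat (Z.abs k) + Z.to_nat (Z.abs k'))%nat).
    specialize (HN N ltac:(lia)). unfold Mpartial in HN.
    set (f := fun i => Mterm a b c t x m (Z.of_nat i - Z.of_nat N)%Z) in HN.
    assert (Hf : forall j, (Z.abs j <= Z.of_nat N)%Z ->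
                 x j = true /\ window a b c t m j -> f (Z.to_nat (j + Z.of_nat N)) = 1).
    { intros j Hj [Hx Hw]. unfold f.
      replace (Z.of_nat (Z.to_nat (j + Z.of_nat N)) - Z.of_nat N)%Z with j by lia.
      now apply Mterm_hit. }
    pose proof (sum_ge_two_terms f (2 * N) (Z.to_nat (k + Z.of_nat N))
                  (Z.to_nat (k' + Z.of_nat N)) ltac:(intros; apply Mterm_nonneg)
                  ltac:(lia) ltac:(lia) ltac:(lia)) as Hge.
    rewrite (Hf k), (Hf k') in Hge by (auto; lia). lra.
  - intros [k [Hk Huniq]]. exists (Z.to_nat (Z.abs k)). intros N HN. unfold Mpartial.
    rewrite (sum_single _ _ (Z.to_nat (k + Z.of_nat N))) by
      (try lia; intros i Hi Hne; apply Mterm_miss; intros Hh; apply Huniq in Hh; lia).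
    replace (Z.of_nat (Z.to_nat (k + Z.of_nat N)) - Z.of_nat N)%Z with k by lia.
    apply Mterm_hit; apply Hk.
Qed.

Lemma S_abc_iff a b c t : S_abc a b c t <-> exists x, admissible a b c t x.
Proof.
  split; intros [x [Hx0 Hrows]]; exists x; split; try exact Hx0;
    intros m; apply row_eq_one_iff; apply Hrows.
Qed.

Lemma admissible_unique a b c t x m k k' : admissible a b c t x ->
  x k = true -> window a b c t m k -> x k' = true -> window a b c t m k' -> k = k'.
Proof.
  intros [_ Hrows] Hx Hw Hx' Hw'. destruct (Hrows m) as [k0 [_ Hu]].
  pose proof (Hu k (conj Hx Hw)). pose proof (Hu k' (conj Hx' Hw')). congruence.
Qed.

Lemma admissible_shift a b c t x K : admissible a b c t x -> x K = true ->
  admissible a b c (t + b * IZR K) (fun k => x (k + K)%Z).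
Proof.
  intros [_ Hrows] HK. split; [exact HK|]. intros m.
  assert (Hw : forall k, window a b c (t + b * IZR K) m k <-> window a b c t m (k + K)).
  { intros k. unfold window. rewrite plus_IZR. split; intros; lra. }
  destruct (Hrows m) as [k [Hk Hu]]. exists (k - K)%Z. split.
  - rewrite Hw. replace (k - K + K)%Z with k by ring. exact Hk.
  - intros k' [Hx' Hw']. rewrite Hw in Hw'. specialize (Hu _ (conj Hx' Hw')). lia.
Qed.

Lemma residue_exists a alpha t : 0 < a -> exists p, alpha <= t - a * IZR p < alpha + a.
Proof.
  intros Ha. destruct (euclidian_division (t - alpha) a) as [p [r [Ht Hr]]]; [lra|].
  rewrite Rabs_right in Hr by lra. exists p. lra.
Qed.

Lemma residue_unique a alpha t p q : 0 < a ->
  alpha <= t - a * IZR p < alpha + a -> alpha <= t - a * IZR q < alpha + a -> p = q.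
Proof.
  intros Ha Hp Hq.
  assert (H1 : (p - q < 1)%Z) by (apply lt_IZR; rewrite minus_IZR; nra).
  assert (H2 : (q - p < 1)%Z) by (apply lt_IZR; rewrite minus_IZR; nra).
  lia.
Qed.

Lemma in_per_window a alpha u v t p : 0 < a -> alpha <= u -> v <= alpha + a ->
  alpha <= t - a * IZR p < alpha + a -> (in_per a u v t <-> u <= t - a * IZR p < v).
Proof.
  intros Ha Hu Hv Hp. split.
  - intros [k Hk]. replace p with k; [exact Hk|]. apply (residue_unique a alpha t); lra.
  - intros H. exists p. exact H.
Qed.

Lemma next_multiple a p m : 0 < a -> a * IZR p < a * IZR m -> a * IZR p + a <= a * IZR m.
Proof.
  intros Ha H. assert (Hpm : (p + 1 <= m)%Z).
  { cut (p < m)%Z; [lia|]. apply lt_IZR. nra. }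
  apply IZR_le in Hpm. rewrite plus_IZR in Hpm. nra.
Qed.

Lemma lattice_point_unique b j k : 0 < b ->
  b * IZR j - b < b * IZR k < b * IZR j + b -> k = j.
Proof.
  intros Hb H.
  assert (H1 : (k < j + 1)%Z) by (apply lt_IZR; rewrite plus_IZR; nra).
  assert (H2 : (j - 1 < k)%Z) by (apply lt_IZR; rewrite minus_IZR; nra).
  lia.
Qed.

Lemma lattice_exceeds b r : 0 < b -> exists M, (0 <= M)%Z /\ r < b * IZR M.
Proof.
  intros Hb. destruct (archimed (r / b)) as [Hup _].
  exists (Z.max 0 (up (r / b))). split; [lia|].
  assert (Hle : IZR (up (r / b)) <= IZR (Z.max 0 (up (r / b)))) by (apply IZR_le; lia).
  assert (Hr : r = b * (r / b)) by (field; lra). nra.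
Qed.

Lemma discrete_crossing (p : Z -> R) v j0 (d : nat) :
  p j0 < v -> v <= p (j0 + Z.of_nat d)%Z -> exists j, p (j - 1)%Z < v <= p j.
Proof.
  intros H0. induction d as [|d IH]; intros Hd.
  - rewrite Z.add_0_r in Hd. lra.
  - destruct (Rle_lt_dec v (p (j0 + Z.of_nat d)%Z)) as [Hle|Hlt]; [now apply IH|].
    exists (j0 + Z.of_nat (S d))%Z. split; [|exact Hd].
    replace (j0 + Z.of_nat (S d) - 1)%Z with (j0 + Z.of_nat d)%Z by lia. exact Hlt.
Qed.

(** * Staircases give admissible vectors *)

Definition support_of (pos : Z -> R) (b : R) (k : Z) : bool :=
  if excluded_middle_informative (exists j, pos j = pos 0%Z + b * IZR k) then true else false.

Section Staircase.
Variables (a b c : R) (pos : Z -> R).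
Hypothesis hb : 0 < b.
Hypothesis step : forall j, exists K, (1 <= K)%Z /\ pos (j + 1)%Z = pos j + b * IZR K.
Hypothesis gap : forall j m, pos (j + 1)%Z - c < a * IZR m <-> pos j < a * IZR m.

Lemma staircase_spread j j' : (j <= j')%Z -> pos j + b * IZR (j' - j) <= pos j'.
Proof.
  intros Hjj. replace j' with (j + Z.of_nat (Z.to_nat (j' - j)))%Z by lia.
  induction (Z.to_nat (j' - j)) as [|d IH].
  - replace (j + Z.of_nat 0 - j)%Z with 0%Z by lia. rewrite Z.add_0_r. lra.
  - replace (j + Z.of_nat (S d))%Z with (j + Z.of_nat d + 1)%Z by lia.
    destruct (step (j + Z.of_nat d)) as [K [HK ->]]. apply IZR_le in HK.
    replace (j + Z.of_nat d + 1 - j)%Z with ((j + Z.of_nat d - j) + 1)%Z by lia.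
    rewrite plus_IZR. nra.
Qed.

Lemma staircase_mono j j' : (j <= j')%Z -> pos j <= pos j'.
Proof.
  intros Hjj. pose proof (staircase_spread j j' Hjj).
  assert (0 <= IZR (j' - j)) by (apply IZR_le; lia). nra.
Qed.

Lemma staircase_lattice j : exists k, pos j = pos 0%Z + b * IZR k.
Proof.
  induction j as [|j [k Hk]|j [k Hk]] using Z.peano_ind.
  - exists 0%Z. ring.
  - destruct (step j) as [K [_ HK]]. exists (k + K)%Z.
    rewrite <- Z.add_1_r, HK, Hk, plus_IZR. ring.
  - destruct (step (Z.pred j)) as [K [_ HK]]. rewrite Z.add_1_r, Z.succ_pred in HK.
    exists (k - K)%Z. rewrite minus_IZR. lra.
Qed.

Lemma staircase_crossing v : exists j, pos (j - 1)%Z < v <= pos j.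
Proof.
  destruct (lattice_exceeds b (v - pos 0%Z) hb) as [M [HM Hup]].
  destruct (lattice_exceeds b (pos 0%Z - v) hb) as [L [HL Hdown]].
  pose proof (staircase_spread 0 M HM) as Hhigh.
  pose proof (staircase_spread (- L) 0 ltac:(lia)) as Hlow.
  rewrite Z.sub_0_r in Hhigh. rewrite Z.sub_opp_r, Z.add_0_l in Hlow.
  apply (discrete_crossing pos v (- L) (Z.to_nat (M + L))); [lra|].
  replace (- L + Z.of_nat (Z.to_nat (M + L)))%Z with M by lia. lra.
Qed.

(* Row m is met exactly by the first value of pos reaching a*m. *)
Lemma staircase_admissible : admissible a b c (pos 0%Z) (support_of pos b).
Proof.
  split.
  - unfold support_of. destruct (excluded_middle_informative _) as [_|Hn]; [reflexivity|].
    exfalso. apply Hn. exists 0%Z. ring.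
  - intros m. destruct (staircase_crossing (a * IZR m)) as [j [Hbelow Habove]].
    destruct (staircase_lattice j) as [k Hk]. exists k. split; [split|].
    + unfold support_of. destruct (excluded_middle_informative _) as [_|Hn]; [reflexivity|].
      exfalso. apply Hn. exists j. exact Hk.
    + pose proof (proj2 (gap (j - 1) m) Hbelow) as Hgap. rewrite Z.sub_add in Hgap.
      unfold window. lra.
    + intros k' [Hx' Hw']. unfold support_of in Hx'.
      destruct (excluded_middle_informative _) as [[j' Hj']|_]; [|discriminate].
      unfold window in Hw'.
      assert (Hbelow' : pos (j' - 1)%Z < a * IZR m).
      { apply (proj1 (gap (j' - 1) m)). rewrite Z.sub_add. lra. }
      assert (Hj : j' = j).
      { destruct (Z.lt_total j' j) as [Hlt|[Heq|Hgt]]; [exfalso|exact Heq|exfalso].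
        - pose proof (staircase_mono j' (j - 1) ltac:(lia)). lra.
        - pose proof (staircase_mono j (j' - 1) ltac:(lia)). lra. }
      subst j'. apply eq_IZR, (Rmult_eq_reg_l b); lra.
Qed.

End Staircase.

Definition orbit (f g : R -> R) (t : R) (j : Z) : R :=
  if (0 <=? j)%Z then Nat.iter (Z.to_nat j) f t else Nat.iter (Z.to_nat (- j)) g t.

Lemma iter_invariant (f : R -> R) (E : R -> Prop) t n :
  maps_into f E -> E t -> E (Nat.iter n f t).
Proof. intros Hf Ht. induction n as [|n IH]; simpl; [exact Ht|]. apply Hf, IH. Qed.

Lemma orbit_invariant f g (E : R -> Prop) t :
  maps_into f E -> maps_into g E -> E t -> forall j, E (orbit f g t j).
Proof. intros Hf Hg Ht j. unfold orbit. destruct (0 <=? j)%Z; now apply iter_invariant. Qed.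

Lemma orbit_succ f g (E : R -> Prop) t : maps_into g E -> E t ->
  (forall u, E u -> f (g u) = u) -> forall j, orbit f g t (j + 1) = f (orbit f g t j).
Proof.
  intros Hg Ht Hfg j. unfold orbit.
  destruct (Z.leb_spec 0 j) as [Hj|Hj].
  - destruct (Z.leb_spec 0 (j + 1)) as [_|]; [|lia].
    replace (Z.to_nat (j + 1)) with (S (Z.to_nat j)) by lia. apply Nat.iter_succ.
  - replace (Z.to_nat (- j)) with (S (Z.to_nat (- (j + 1)))) by lia.
    rewrite Nat.iter_succ, Hfg by now apply iter_invariant.
    destruct (Z.leb_spec 0 (j + 1)) as [Hj'|Hj']; [|reflexivity].
    replace (j + 1)%Z with 0%Z by lia. reflexivity.
Qed.

Lemma complement_invariant (f g : R -> R) (P Q : R -> Prop) :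
  maps_into g P -> (forall u, Q u -> f u = u) -> (forall u, ~ Q u -> g (f u) = u) ->
  maps_into f (fun u => ~ P u).
Proof.
  intros Hg Hfix Hinv u HnP HPf. apply HnP. destruct (classic (Q u)) as [HQ|HQ].
  - rewrite <- (Hfix u HQ). exact HPf.
  - rewrite <- (Hinv u HQ). apply Hg. exact HPf.
Qed.

(** * The maps R and R~ *)

Lemma c_decomp b c : c = flcb b c * b + c0 b c.
Proof. unfold c0. ring. Qed.

Section Maps.
Variables a b c : R.
Hypothesis ha : 0 < a.
Hypothesis hab : a < b.
Hypothesis hbc : b < c.
Hypothesis hc0_low : b - a < c0 b c.
Hypothesis hc0_high : c0 b c < a.

(* floor(c/b) >= 1, as floor(c/b)*b = c - c0 > 0. *)
Lemma flcb_ge1 : (1 <= Int_part (c / b))%Z.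
Proof.
  assert (Hpos : 0 < flcb b c) by (pose proof (c_decomp b c); nra).
  apply lt_IZR in Hpos. lia.
Qed.

Lemma Rmap_residue t p : 0 <= t - a * IZR p < a ->
  (t - a * IZR p < c0 b c + a - b -> Rmap a b c t = t + flcb b c * b + b) /\
  (c0 b c + a - b <= t - a * IZR p < c0 b c -> Rmap a b c t = t) /\
  (c0 b c <= t - a * IZR p -> Rmap a b c t = t + flcb b c * b).
Proof.
  intros Hp.
  pose proof (in_per_window a 0 0 (c0 b c + a - b) t p ha ltac:(lra) ltac:(lra) ltac:(lra)) as E1.
  pose proof (in_per_window a 0 (c0 b c + a - b) (c0 b c) t p ha ltac:(lra) ltac:(lra) ltac:(lra))
    as E2.
  unfold Rmap.
  destruct (excluded_middle_informative _) as [H1|H1]; rewrite E1 in H1;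
    [|destruct (excluded_middle_informative _) as [H2|H2]; rewrite E2 in H2];
    repeat split; intros; lra.
Qed.

Lemma Hset_residue t p : 0 <= t - a * IZR p < a ->
  (Hset a b c t <-> c0 b c + a - b <= t - a * IZR p < c0 b c).
Proof. intros Hp. apply (in_per_window a 0); lra. Qed.

Lemma Rtmap_residue t q : c - a <= t - a * IZR q < c ->
  (t - a * IZR q < c - c0 b c -> Rtmap a b c t = t - flcb b c * b) /\
  (c - c0 b c <= t - a * IZR q < c - c0 b c + b - a -> Rtmap a b c t = t) /\
  (c - c0 b c + b - a <= t - a * IZR q -> Rtmap a b c t = t - flcb b c * b - b).
Proof.
  intros Hq.
  pose proof (in_per_window a (c - a) (c - a) (c - c0 b c) t q ha ltac:(lra) ltac:(lra) ltac:(lra))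
    as E1.
  pose proof (in_per_window a (c - a) (c - c0 b c) (c - c0 b c + b - a) t q ha
                ltac:(lra) ltac:(lra) ltac:(lra)) as E2.
  unfold Rtmap.
  destruct (excluded_middle_informative _) as [H1|H1]; rewrite E1 in H1;
    [|destruct (excluded_middle_informative _) as [H2|H2]; rewrite E2 in H2];
    repeat split; intros; lra.
Qed.

Lemma Htset_residue t q : c - a <= t - a * IZR q < c ->
  (Htset a b c t <-> c - c0 b c <= t - a * IZR q < c - c0 b c + b - a).
Proof. intros Hq. apply (in_per_window a (c - a)); lra. Qed.

(* Column 0 meets row p (residue r in [0, a)); the column meeting row p + 1
   cannot also meet row p, which places it in [c - r, c + a - r). *)
Lemma next_support t x p : admissible a b c t x -> 0 <= t - a * IZR p < a ->
  exists k, x k = true /\ c - (t - a * IZR p) <= b * IZR k < c + a - (t - a * IZR p).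
Proof.
  intros Hadm Hp. pose proof Hadm as [Hx0 Hrows].
  destruct (Hrows (p + 1)%Z) as [k [[Hxk Hwk] _]].
  unfold window in Hwk. rewrite plus_IZR in Hwk.
  exists k. split; [exact Hxk|]. split; [|lra].
  apply Rnot_lt_le. intros Hlt.
  assert (Hk0 : k = 0%Z)
    by (apply (admissible_unique a b c t x p); auto; unfold window; lra).
  subst k. lra.
Qed.

(* Symmetrically, with residue s in [c - a, c), column 0 meets row q and the
   column meeting row q - 1 lies in [-a - s, -s). *)
Lemma prev_support t x q : admissible a b c t x -> c - a <= t - a * IZR q < c ->
  exists k, x k = true /\ - a - (t - a * IZR q) <= b * IZR k < - (t - a * IZR q).
Proof.
  intros Hadm Hq. pose proof Hadm as [Hx0 Hrows].
  destruct (Hrows (q - 1)%Z) as [k [[Hxk Hwk] _]].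
  unfold window in Hwk. rewrite minus_IZR in Hwk.
  exists k. split; [exact Hxk|]. split; [lra|].
  apply Rnot_le_lt. intros Hge.
  assert (Hk0 : k = 0%Z)
    by (apply (admissible_unique a b c t x q); auto; unfold window; lra).
  subst k. lra.
Qed.

Lemma admissible_forward t x : admissible a b c t x ->
  ~ Hset a b c t /\ exists K, x K = true /\ Rmap a b c t = t + b * IZR K.
Proof.
  intros Hadm. destruct (residue_exists a 0 t ha) as [p Hp].
  destruct (next_support t x p Hadm ltac:(lra)) as [k [Hxk Hk]].
  destruct (Rmap_residue t p ltac:(lra)) as (Rlow & _ & Rhigh).
  rewrite (Hset_residue t p) by lra.
  pose proof (c_decomp b c) as Hc. unfold flcb in *.
  set (N := Int_part (c / b)) in *.
  destruct (Rlt_le_dec (t - a * IZR p) (c0 b c + a - b)) as [Hr|Hr];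
    [|destruct (Rlt_le_dec (t - a * IZR p) (c0 b c)) as [Hr'|Hr']].
  - assert (Hk' : k = (N + 1)%Z)
      by (apply (lattice_point_unique b); [lra|rewrite plus_IZR; lra]).
    subst k. split; [lra|]. exists (N + 1)%Z. split; [exact Hxk|].
    rewrite Rlow, plus_IZR by lra. ring.
  - exfalso. assert (Hk' : k = N) by (apply (lattice_point_unique b); lra).
    subst k. lra.
  - assert (Hk' : k = N) by (apply (lattice_point_unique b); lra).
    subst k. split; [lra|]. exists N. split; [exact Hxk|]. rewrite Rhigh by lra. ring.
Qed.

Lemma admissible_backward t x : admissible a b c t x ->
  ~ Htset a b c t /\ exists K, x K = true /\ Rtmap a b c t = t + b * IZR K.
Proof.
  intros Hadm. destruct (residue_exists a (c - a) t ha) as [q Hq].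
  replace (c - a + a) with c in Hq by ring.
  destruct (prev_support t x q Hadm Hq) as [k [Hxk Hk]].
  destruct (Rtmap_residue t q Hq) as (Rtlow & _ & Rthigh).
  rewrite (Htset_residue t q Hq).
  pose proof (c_decomp b c) as Hc. unfold flcb in *.
  set (N := Int_part (c / b)) in *.
  destruct (Rlt_le_dec (t - a * IZR q) (c - c0 b c)) as [Hs|Hs];
    [|destruct (Rlt_le_dec (t - a * IZR q) (c - c0 b c + b - a)) as [Hs'|Hs']].
  - assert (Hk' : k = (- N)%Z)
      by (apply (lattice_point_unique b); [lra|rewrite opp_IZR; lra]).
    subst k. split; [lra|]. exists (- N)%Z. split; [exact Hxk|].
    rewrite Rtlow, opp_IZR by lra. ring.
  - exfalso. assert (Hk' : k = (- N)%Z)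
      by (apply (lattice_point_unique b); [lra|rewrite opp_IZR; lra]).
    subst k. rewrite opp_IZR in Hk. lra.
  - assert (Hk' : k = (- N - 1)%Z)
      by (apply (lattice_point_unique b); [lra|rewrite minus_IZR, opp_IZR; lra]).
    subst k. split; [lra|]. exists (- N - 1)%Z. split; [exact Hxk|].
    rewrite Rthigh, minus_IZR, opp_IZR by lra. ring.
Qed.

(* By re-centring at the next or previous support point, S is invariant
   under R and R~; by the above it avoids H u H~. *)
Lemma S_Rmap_invariant : maps_into (Rmap a b c) (S_abc a b c).
Proof.
  intros t HS. apply S_abc_iff in HS as [x Hx].
  destruct (admissible_forward t x Hx) as [_ [K [HK ->]]].
  apply S_abc_iff. exists (fun k => x (k + K)%Z). now apply admissible_shift.
Qed.

Lemma S_Rtmap_invariant : maps_into (Rtmap a b c) (S_abc a b c).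
Proof.
  intros t HS. apply S_abc_iff in HS as [x Hx].
  destruct (admissible_backward t x Hx) as [_ [K [HK ->]]].
  apply S_abc_iff. exists (fun k => x (k + K)%Z). now apply admissible_shift.
Qed.

Lemma S_avoids_H t : S_abc a b c t -> ~ (Hset a b c t \/ Htset a b c t).
Proof.
  intros HS. apply S_abc_iff in HS as [x Hx].
  destruct (admissible_forward t x Hx) as [HnH _].
  destruct (admissible_backward t x Hx) as [HnHt _]. tauto.
Qed.

(* Off H, R is a staircase step: it advances by a positive multiple of b and
   satisfies the gap condition of [Staircase]. *)
Lemma Rmap_advance u : ~ Hset a b c u ->
  exists K, (1 <= K)%Z /\ Rmap a b c u = u + b * IZR K /\
  forall m, Rmap a b c u - c < a * IZR m <-> u < a * IZR m.
Proof.
  intros HnH. destruct (residue_exists a 0 u ha) as [p Hp].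
  rewrite Rplus_0_l in Hp. rewrite (Hset_residue u p Hp) in HnH.
  destruct (Rmap_residue u p Hp) as (Rlow & _ & Rhigh).
  pose proof (c_decomp b c) as Hc. pose proof flcb_ge1 as HN. unfold flcb in *.
  destruct (Rlt_le_dec (u - a * IZR p) (c0 b c + a - b)) as [Hr|Hr].
  - exists (Int_part (c / b) + 1)%Z. rewrite Rlow, plus_IZR by lra.
    split; [lia|]. split; [ring|].
    intros m. pose proof (next_multiple a p m ha). split; intros; lra.
  - exists (Int_part (c / b)). rewrite Rhigh by lra.
    split; [exact HN|]. split; [ring|].
    intros m. pose proof (next_multiple a p m ha). split; intros; lra.
Qed.

Lemma Rmap_fix u : Hset a b c u -> Rmap a b c u = u.
Proof. intros [p Hp]. apply (Rmap_residue u p); lra. Qed.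

Lemma Rtmap_fix u : Htset a b c u -> Rtmap a b c u = u.
Proof. intros [q Hq]. apply (Rtmap_residue u q); lra. Qed.

Lemma Rtmap_Rmap u : ~ Hset a b c u -> Rtmap a b c (Rmap a b c u) = u.
Proof.
  intros HnH. destruct (residue_exists a 0 u ha) as [p Hp].
  rewrite Rplus_0_l in Hp. rewrite (Hset_residue u p Hp) in HnH.
  destruct (Rmap_residue u p Hp) as (Rlow & _ & Rhigh). pose proof (c_decomp b c) as Hc.
  destruct (Rlt_le_dec (u - a * IZR p) (c0 b c + a - b)) as [Hr|Hr].
  - rewrite Rlow by lra.
    destruct (Rtmap_residue (u + flcb b c * b + b) (p + 1)) as (_ & _ & Rthigh);
      [rewrite plus_IZR; lra|].
    rewrite Rthigh by (rewrite plus_IZR; lra). ring.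
  - rewrite Rhigh by lra.
    destruct (Rtmap_residue (u + flcb b c * b) (p + 1)) as (Rtlow & _ & _);
      [rewrite plus_IZR; lra|].
    rewrite Rtlow by (rewrite plus_IZR; lra). ring.
Qed.

Lemma Rmap_Rtmap u : ~ Htset a b c u -> Rmap a b c (Rtmap a b c u) = u.
Proof.
  intros HnHt. destruct (residue_exists a (c - a) u ha) as [q Hq].
  replace (c - a + a) with c in Hq by ring. rewrite (Htset_residue u q Hq) in HnHt.
  destruct (Rtmap_residue u q Hq) as (Rtlow & _ & Rthigh). pose proof (c_decomp b c) as Hc.
  destruct (Rlt_le_dec (u - a * IZR q) (c - c0 b c)) as [Hs|Hs].
  - rewrite Rtlow by lra.
    destruct (Rmap_residue (u - flcb b c * b) (q - 1)) as (_ & _ & Rhigh);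
      [rewrite minus_IZR; lra|].
    rewrite Rhigh by (rewrite minus_IZR; lra). ring.
  - rewrite Rthigh by lra.
    destruct (Rmap_residue (u - flcb b c * b - b) (q - 1)) as (Rlow & _ & _);
      [rewrite minus_IZR; lra|].
    rewrite Rlow by (rewrite minus_IZR; lra). ring.
Qed.

(* Maximality: the two-sided orbit of a point of such an E is a staircase. *)
Lemma S_maximal (E : R -> Prop) :
  maps_into (Rmap a b c) E -> maps_into (Rtmap a b c) E ->
  (forall t, E t -> ~ (Hset a b c t \/ Htset a b c t)) -> forall t, E t -> S_abc a b c t.
Proof.
  intros HR HRt Havoid t Ht.
  set (pos := orbit (Rmap a b c) (Rtmap a b c) t).
  assert (Hadv : forall j, exists K, (1 <= K)%Z /\ pos (j + 1)%Z = pos j + b * IZR K /\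
                   forall m, pos (j + 1)%Z - c < a * IZR m <-> pos j < a * IZR m).
  { intros j. unfold pos. rewrite (orbit_succ _ _ E) by
      (auto; intros u Hu; apply Rmap_Rtmap; intros Hh; apply (Havoid u Hu); now right).
    apply Rmap_advance. intros Hh. apply (Havoid (pos j)); [|now left].
    now apply orbit_invariant. }
  apply S_abc_iff. exists (support_of pos b). change t with (pos 0%Z).
  apply (staircase_admissible a b c pos); [lra| |].
  - intros j. destruct (Hadv j) as [K [HK [Hstep _]]]. eauto.
  - intros j. destruct (Hadv j) as [K [_ [_ Hgap]]]. exact Hgap.
Qed.

End Maps.

Theorem theorem4p1 (a b c : R) :
  0 < a -> a < b -> b < c ->
  b - a < c0 b c -> c0 b c < a ->
  (* (i) *)
  ((maps_into (Rmap a b c) (S_abc a b c) /\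
    maps_into (Rtmap a b c) (S_abc a b c) /\
    (forall t, S_abc a b c t -> ~ (Hset a b c t \/ Htset a b c t))) /\
   (forall E : R -> Prop,
      maps_into (Rmap a b c) E -> maps_into (Rtmap a b c) E ->
      (forall t, E t -> ~ (Hset a b c t \/ Htset a b c t)) ->
      forall t, E t -> S_abc a b c t)) /\
  (* (ii) *)
  ((maps_into (Rmap a b c) (fun t => ~ S_abc a b c t) /\
    maps_into (Rtmap a b c) (fun t => ~ S_abc a b c t) /\
    (forall t, Hset a b c t \/ Htset a b c t -> ~ S_abc a b c t)) /\
   (forall F : R -> Prop,
      maps_into (Rmap a b c) F -> maps_into (Rtmap a b c) F ->
      (forall t, Hset a b c t \/ Htset a b c t -> F t) ->
      forall t, ~ S_abc a b c t -> F t)).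
Proof.
  intros ha hab hbc hlow hhigh.
  pose proof (S_Rmap_invariant a b c ha hab hbc hlow hhigh) as SR.
  pose proof (S_Rtmap_invariant a b c ha hab hbc hlow hhigh) as SRt.
  pose proof (S_avoids_H a b c ha hab hbc hlow hhigh) as Savoid.
  pose proof (Rmap_fix a b c ha hab hlow hhigh) as Rfix.
  pose proof (Rtmap_fix a b c ha hab hlow hhigh) as Rtfix.
  pose proof (Rtmap_Rmap a b c ha hab hlow hhigh) as RtR.
  pose proof (Rmap_Rtmap a b c ha hab hlow hhigh) as RRt.
  split; [split; [auto|]|split; [split; [|split]|]].
  - exact (S_maximal a b c ha hab hbc hlow hhigh).
  - exact (complement_invariant _ _ _ _ SRt Rfix RtR).
  - exact (complement_invariant _ _ _ _ SR Rtfix RRt).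
  - intros t Hh HS. exact (Savoid t HS Hh).
  - (* the complement of F is invariant and avoids H u H~, hence lies in S *)
    intros F HRF HRtF HF t HnS. apply NNPP. intros HnF. apply HnS.
    apply (S_maximal a b c ha hab hbc hlow hhigh (fun u => ~ F u)); [| | |exact HnF].
    + exact (complement_invariant _ _ _ _ HRtF Rfix RtR).
    + exact (complement_invariant _ _ _ _ HRF Rtfix RRt).
    + intros u HnFu Hh. exact (HnFu (HF u Hh)).
Qed.
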